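(* Let $n\ge 2$, $d\in\mathbb{R}$, $a\in\mathbb{R}_+^n$ (all $a_i>0$), $b\in\mathbb{R}^n$, and consider the problem of minimizing $f(x)=\sum_{i=1}^n \left(\tfrac12 a_i x_i^2+b_i x_i\right)$ over $x\in\mathbb{R}^n$ subject to $\sum_{i=1}^n x_i=d$. Let $H=\mathrm{diag}(a_1,\dots,a_n)$. Let $L\in\mathbb{R}^{n\times n}$ be the weighted Laplacian of an undirected connected graph on $n$ nodes (so $L=L^\top\succeq 0$, $L\mathbf{1}_n=0$, and $0$ is a simple eigenvalue of $L$). Assume there exists $\varepsilon\in[0,1)$ such that $-\varepsilon I_{n-1}\preceq I_{n-1}-U^\top LHL\,U\preceq \varepsilon I_{n-1}$, where $U\in\mathbb{R}^{n\times(n-1)}$ is any matrix whose columns form an orthonormal basis of $\mathbf{1}_n^\perp$. Fix $q\in\{0,1,2,\dots\}$ and an initial point $x^0$ with $\sum_i x^0_i=d$, and define the iteration $$x^{k+1}=x^k-L\sum_{p=0}^{q}(I_n-LHL)^p\,(Lb+LHx^k),\qquad k\ge 0.$$ Then the problem has a unique optimal solution $x^\star$, every iterate satisfies $\sum_i x^k_i=d$, and $x^\star$ is globally exponentially stable for this iteration: there exist a positive definite quadratic function $V$ on the affine set $\{x:\sum_i x_i=d\}$ with $V(x^\star)=0$ and a constant $\hat c\in(0,1)$ independent of $k$ and $x^0$ such that $V(x^{k+1})\le (1-\hat c)V(x^k)$ for all $k$; in particular $x^k\to x^\star$ exponentially fast.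
   Context: This iteration is the ''distributed approx-Newton'' algorithm (DANA) with unit step size: the term $-\sum_{p=0}^q(I_n-LHL)^p(Lb+LHx^k)$ is a truncated Taylor-series ($q$-approximation) of a Newton step for the reformulated unconstrained problem $\min_z f(x^k+Lz)$. $\mathbf{1}_n$ denotes the all-ones vector and $\mathbf{1}_n^\perp$ its orthogonal complement. *)

From HB Require Import structures.
From mathcomp Require Import all_boot all_order all_algebra.
Set Implicit Arguments. Unset Strict Implicit. Unset Printing Implicit Defensive.
Import Order.TTheory GRing.Theory Num.Theory.
Local Open Scope ring_scope.

Section Defs.
Variable R : realFieldType.

Definition qform (m : nat) (A : 'M[R]_m) (v : 'cV[R]_m) : R := (v^T *m A *m v) 0 0.

Definition psd (m : nat) (A : 'M[R]_m) : Prop := forall v : 'cV[R]_m, 0 <= qform A v.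
Definition loewner_le (m : nat) (A B : 'M[R]_m) : Prop := psd (B - A).

(* weighted Laplacian of the graph with (symmetric, nonnegative) weight matrix w;
   diagonal entries of w (self-loops) are ignored *)
Definition laplacian (n : nat) (w : 'M[R]_n) : 'M[R]_n :=
  \matrix_(i, j) (if i == j then \sum_(k | k != i) w i k else - w i j).

Definition weighted_graph (n : nat) (w : 'M[R]_n) : Prop :=
  w^T = w /\ forall i j, 0 <= w i j.

Definition connected_graph (n : nat) (w : 'M[R]_n) : Prop :=
  forall i j : 'I_n, connect (fun k l => 0 < w k l) i j.

Definition csum (n : nat) (x : 'cV[R]_n) : R := \sum_i x i 0.

Definition fobj (n : nat) (a b x : 'cV[R]_n) : R :=
  \sum_i (2^-1 * a i 0 * x i 0 ^+ 2 + b i 0 * x i 0).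

Definition Hmat (n : nat) (a : 'cV[R]_n) : 'M[R]_n := diag_mx a^T.

Definition dana_step (n : nat) (L H : 'M[R]_n) (b : 'cV[R]_n) (q : nat)
    (x : 'cV[R]_n) : 'cV[R]_n :=
  x - L *m (\sum_(p < q.+1) (1%:M - L *m H *m L) ^+ p) *m (L *m b + L *m H *m x).

Definition dana_iter (n : nat) (L H : 'M[R]_n) (b : 'cV[R]_n) (q : nat)
    (x0 : 'cV[R]_n) (k : nat) : 'cV[R]_n :=
  iter k (dana_step L H b q) x0.

End Defs.

From HB Require Import structures.
From mathcomp Require Import all_boot all_order all_algebra.
From mathcomp Require Import ring lra.
Import Order.TTheory GRing.Theory Num.Theory.
Local Open Scope ring_scope.
Set Implicit Arguments. Unset Strict Implicit. Unset Printing Implicit Defensive.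

(* The optimum xs is explicit from the KKT conditions a_i x_i + b_i = nu,
   sum_i x_i = d, and the constraint is preserved because every update lies in
   the range of the symmetric L, which annihilates 1.  Put T := U^T L H and
   B := I - U^T L H L U; the spectral hypothesis says -eps I <= B <= eps I, so
   |B u| <= eps |u|.  Since L (H xs + b) = 0 and U U^T acts as the identity on
   both sides of L, the truncated Neumann sum telescopes,
   (I - B) sum_(p <= q) B^p = I - B^(q+1), and the error obeys
   T (x' - xs) = B^(q+1) T (x - xs) for x' the next iterate.  Hence
   V(x) := |T (x - xs)|^2 contracts by eps^(2(q+1)), and on the constraint set
   V is equivalent to |x - xs|^2 because U^T L H L U >= (1 - eps) I and H is
   positive definite. *)

Section Dot.
Variable R : realFieldType.
Implicit Types (p : nat).

Definition dot p (u v : 'cV[R]_p) : R := (u^T *m v) 0 0.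

Lemma dotE p (u v : 'cV[R]_p) : dot u v = \sum_i u i 0 * v i 0.
Proof. by rewrite /dot !mxE; apply: eq_bigr => i _; rewrite mxE. Qed.

Lemma dotC p (u v : 'cV[R]_p) : dot u v = dot v u.
Proof. by rewrite !dotE; apply: eq_bigr => i _; rewrite mulrC. Qed.

Lemma dotDl p (u v w : 'cV[R]_p) : dot (u + v) w = dot u w + dot v w.
Proof. by rewrite !dotE -big_split; apply: eq_bigr => i _; rewrite mxE mulrDl. Qed.

Lemma dotZl p c (u w : 'cV[R]_p) : dot (c *: u) w = c * dot u w.
Proof. by rewrite !dotE mulr_sumr; apply: eq_bigr => i _; rewrite mxE mulrA. Qed.

Lemma dotNl p (u w : 'cV[R]_p) : dot (- u) w = - dot u w.
Proof. by rewrite -scaleN1r dotZl mulN1r. Qed.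

Lemma dotBl p (u v w : 'cV[R]_p) : dot (u - v) w = dot u w - dot v w.
Proof. by rewrite dotDl dotNl. Qed.

Lemma dotDr p (u v w : 'cV[R]_p) : dot w (u + v) = dot w u + dot w v.
Proof. by rewrite !(dotC w) dotDl. Qed.

Lemma dotZr p c (u w : 'cV[R]_p) : dot w (c *: u) = c * dot w u.
Proof. by rewrite !(dotC w) dotZl. Qed.

Lemma dotNr p (u w : 'cV[R]_p) : dot w (- u) = - dot w u.
Proof. by rewrite !(dotC w) dotNl. Qed.

Lemma dotBr p (u v w : 'cV[R]_p) : dot w (u - v) = dot w u - dot w v.
Proof. by rewrite dotDr dotNr. Qed.

Lemma dot0l p (u : 'cV[R]_p) : dot 0 u = 0.
Proof. by rewrite -(scale0r (0 : 'cV[R]_p)) dotZl mul0r. Qed.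

Lemma dot_mulmxl p r (A : 'M[R]_(r, p)) u v : dot (A *m u) v = dot u (A^T *m v).
Proof. by rewrite /dot trmx_mul mulmxA. Qed.

Lemma dot_mulmxr p r (A : 'M[R]_(r, p)) u v : dot u (A *m v) = dot (A^T *m u) v.
Proof. by rewrite dot_mulmxl trmxK. Qed.

Lemma dot_ge0 p (u : 'cV[R]_p) : 0 <= dot u u.
Proof. by rewrite dotE sumr_ge0 // => i _; rewrite -expr2 sqr_ge0. Qed.

Lemma dot_gt0 p (u : 'cV[R]_p) : u != 0 -> 0 < dot u u.
Proof.
move=> u_neq0; rewrite lt_def dot_ge0 andbT; apply: contra u_neq0.
rewrite dotE => /eqP u0; apply/eqP/matrixP => i j; rewrite (ord1 j) mxE.
have sq_ge0 (k : 'I_p) : true -> 0 <= u k 0 * u k 0 by rewrite -expr2 sqr_ge0.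
by apply/eqP; rewrite -sqrf_eq0 expr2 (psumr_eq0P sq_ge0 u0).
Qed.

Lemma qformE p (A : 'M[R]_p) v : qform A v = dot v (A *m v).
Proof. by rewrite /qform /dot mulmxA. Qed.

Lemma csumE p (x : 'cV[R]_p) : csum x = dot (const_mx 1) x.
Proof. by rewrite dotE; apply: eq_bigr => i _; rewrite mxE mul1r. Qed.

End Dot.

Section LoewnerBand.
Variables (R : realFieldType) (p : nat) (B : 'M[R]_p) (eps : R).
Hypotheses (B_sym : B^T = B) (eps_ge0 : 0 <= eps).
Hypotheses (B_ge : psd (B + eps%:M)) (B_le : psd (eps%:M - B)).

(* Polarization of [-eps <= B <= eps] at [u + v] and [u - v]. *)
Lemma loewner_band_cross u v : 4 * dot u (B *m v) <= 2 * eps * (dot u u + dot v v).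
Proof.
have := B_le (u + v); have := B_ge (u - v).
rewrite !qformE mulmxDl mulmxBl !mul_scalar_mx.
have sym : dot v (B *m u) = dot u (B *m v) by rewrite dot_mulmxr B_sym dotC.
rewrite !(mulmxDr, mulmxBr, dotDl, dotDr, dotBl, dotBr, dotZr, scalerDr,
          scalerBr, mulmxN, dotNl, dotNr, opprD) sym (dotC v u).
nra.
Qed.

Lemma loewner_band_contraction x : dot (B *m x) (B *m x) <= eps ^+ 2 * dot x x.
Proof.
have cross1 := loewner_band_cross (B *m x) x.
have := loewner_band_cross (B *m x) (eps *: x).
rewrite -scalemxAr dotZr !dotZl !dotZr => cross2.
have [eps0|eps_neq0] := eqVneq eps 0.
  by move: cross1; rewrite eps0 mulr0 mul0r expr0n /= mul0r; lra.
have eps_gt0 : 0 < eps by rewrite lt_def eps_neq0 eps_ge0.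
by rewrite -(ler_pM2l eps_gt0) expr2; lra.
Qed.

Lemma loewner_band_contraction_pow k x :
  dot (B ^+ k *m x) (B ^+ k *m x) <= (eps ^+ 2) ^+ k * dot x x.
Proof.
elim: k x => [|k IHk] x; first by rewrite expr0 mul1mx expr0 mul1r.
rewrite exprS -mulmxE -mulmxA; apply: le_trans (loewner_band_contraction _) _.
by rewrite [(eps ^+ 2) ^+ k.+1]exprS -mulrA ler_wpM2l ?sqr_ge0.
Qed.

End LoewnerBand.

Section Laplacian.
Variables (R : realFieldType) (n : nat) (w : 'M[R]_n).
Local Notation one := (const_mx 1 : 'cV[R]_n).

Lemma tr_laplacian : w^T = w -> (laplacian w)^T = laplacian w.
Proof.
move=> w_sym; apply/matrixP => i j; rewrite !mxE eq_sym.
case: eqP => [->|_] //.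
by have := congr1 (fun M : 'M[R]_n => M i j) w_sym; rewrite mxE => ->.
Qed.

Lemma laplacian_one : laplacian w *m one = 0.
Proof.
apply/matrixP => i j; rewrite !mxE (bigD1 i) //= !mxE eqxx mulr1.
rewrite [X in _ + X](eq_bigr (fun k => - w i k)); last first.
  by move=> k k_neq_i; rewrite !mxE eq_sym (negbTE k_neq_i) mulr1.
by rewrite sumrN subrr.
Qed.

Lemma tr_one_laplacian : w^T = w -> one^T *m laplacian w = 0.
Proof. by move=> w_sym; rewrite -tr_laplacian // -trmx_mul laplacian_one trmx0. Qed.

Lemma dot_one_laplacian v : w^T = w -> dot one (laplacian w *m v) = 0.
Proof. by move=> w_sym; rewrite dot_mulmxr tr_laplacian // laplacian_one dot0l. Qed.

End Laplacian.

Section OrthonormalComplement.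
Variables (R : realFieldType) (n : nat) (U : 'M[R]_(n, n.-1)).
Hypotheses (n_gt0 : (0 < n)%N) (U_orth : U^T *m U = 1%:M).
Hypothesis U_perp : U^T *m (const_mx 1 : 'cV[R]_n) = 0.
Local Notation one := (const_mx 1 : 'cV[R]_n).
Implicit Types v : 'cV[R]_n.

Lemma tr_one_mul_one k : (const_mx 1 : 'cV[R]_k)^T *m const_mx 1 = (k%:R)%:M.
Proof.
apply/matrixP=> i j; rewrite (ord1 i) (ord1 j) !mxE /=.
under eq_bigr do rewrite !mxE mulr1.
by rewrite sumr_const card_ord.
Qed.

(* The square matrix [one | U] has inverse diag(1/n, I) [one | U]^T. *)
Lemma mulmx_tr_orthonormal_compl : U *m U^T = 1%:M - n%:R^-1 *: (one *m one^T).
Proof.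
case: n U n_gt0 U_orth U_perp => // k V _ V_orth V_perp /=.
pose X := row_mx (const_mx 1 : 'cV[R]_k.+1) V.
pose D : 'M[R]_(1 + k) := block_mx ((k.+1%:R)^-1)%:M 0 0 1%:M.
have k1_neq0 : (k.+1%:R : R) != 0 by rewrite pnatr_eq0.
have one_V : (const_mx 1 : 'cV[R]_k.+1)^T *m V = 0.
  by rewrite -(trmxK V) -trmx_mul V_perp trmx0.
have left_inv : (D *m X^T) *m X = 1%:M.
  rewrite /D /X tr_row_mx mul_block_col !mul0mx addr0 add0r mul1mx.
  rewrite mul_col_row -!mulmxA tr_one_mul_one one_V V_perp V_orth mulmx0.
  by rewrite -scalar_mxM mulVf // [in RHS]scalar_mx_block.
have := @mulmx1C _ (1 + k) (D *m X^T) X left_inv.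
rewrite /X /D mulmxA tr_row_mx mul_row_block !mulmx0 !addr0 add0r mulmx1.
by rewrite mul_row_col => <-; rewrite mul_mx_scalar scalemxAl addrC addKr.
Qed.

Lemma mulmx_one_tr_one v : one *m one^T *m v = dot one v *: one.
Proof.
apply/matrixP => i j; rewrite (ord1 j) -mulmxA !mxE (bigD1 0) //= big1 ?addr0.
  by rewrite !mxE mul1r /dot mulr1 mxE.
by move=> k; rewrite (ord1 k) eqxx.
Qed.

Lemma proj_compl_id p (M : 'M[R]_(n, p)) : one^T *m M = 0 -> U *m U^T *m M = M.
Proof.
move=> oneM; rewrite mulmx_tr_orthonormal_compl mulmxBl mul1mx -scalemxAl.
by rewrite -mulmxA oneM mulmx0 scaler0 subr0.
Qed.

Lemma mulmx_proj_compl p (M : 'M[R]_(p, n)) : M *m one = 0 -> M *m U *m U^T = M.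
Proof.
move=> Mone; rewrite -mulmxA mulmx_tr_orthonormal_compl mulmxBr mulmx1.
by rewrite -scalemxAr mulmxA Mone mul0mx scaler0 subr0.
Qed.

Lemma proj_compl_col v : dot one v = 0 -> U *m (U^T *m v) = v.
Proof.
move=> v_perp; rewrite mulmxA mulmx_tr_orthonormal_compl mulmxBl mul1mx.
by rewrite -scalemxAl mulmx_one_tr_one v_perp scale0r scaler0 subr0.
Qed.

Lemma dot_tr_orthonormal_compl v :
  dot (U^T *m v) (U^T *m v) = dot v v - n%:R^-1 * dot one v ^+ 2.
Proof.
rewrite dot_mulmxl trmxK mulmxA mulmx_tr_orthonormal_compl mulmxBl mul1mx.
by rewrite -scalemxAl mulmx_one_tr_one dotBr !dotZr (dotC v one) expr2 mulrA.
Qed.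

Lemma dot_tr_orthonormal_compl_le v : dot (U^T *m v) (U^T *m v) <= dot v v.
Proof.
rewrite dot_tr_orthonormal_compl gerBl.
by rewrite mulr_ge0 ?invr_ge0 ?ler0n ?sqr_ge0.
Qed.

Lemma dot_tr_orthonormal_compl_perp v :
  dot one v = 0 -> dot (U^T *m v) (U^T *m v) = dot v v.
Proof. by move=> v_perp; rewrite dot_tr_orthonormal_compl v_perp expr0n mulr0 subr0. Qed.

End OrthonormalComplement.

Section DiagonalBounds.
Variables (R : realFieldType) (n : nat) (a : 'cV[R]_n) (lo hi : R).
Hypotheses (lo_ge0 : 0 <= lo) (a_ge : forall i, lo <= a i 0) (a_le : forall i, a i 0 <= hi).
Implicit Types v : 'cV[R]_n.

Lemma tr_Hmat : (Hmat a)^T = Hmat a.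
Proof. by rewrite /Hmat tr_diag_mx. Qed.

Lemma Hmat_mulE v i : (Hmat a *m v) i 0 = a i 0 * v i 0.
Proof. by rewrite /Hmat mul_diag_mx !mxE. Qed.

Lemma dot_Hmat_ge v : lo * dot v v <= dot v (Hmat a *m v).
Proof.
rewrite !dotE mulr_sumr; apply: ler_sum => i _; rewrite Hmat_mulE.
by have := a_ge i; have := sqr_ge0 (v i 0); rewrite expr2; nra.
Qed.

Lemma dot_Hmat_le v : dot v (Hmat a *m v) <= hi * dot v v.
Proof.
rewrite !dotE mulr_sumr; apply: ler_sum => i _; rewrite Hmat_mulE.
by have := a_le i; have := sqr_ge0 (v i 0); rewrite expr2; nra.
Qed.

Lemma dot_Hmat_Hmat_le v : dot (Hmat a *m v) (Hmat a *m v) <= hi ^+ 2 * dot v v.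
Proof.
rewrite !dotE mulr_sumr; apply: ler_sum => i _; rewrite !Hmat_mulE.
rewrite mulrACA expr2 ler_wpM2r -?expr2 ?sqr_ge0 //.
have a_ge0 := le_trans lo_ge0 (a_ge i).
by apply: ler_pM; rewrite ?a_le.
Qed.

End DiagonalBounds.

Lemma col_pos_bounds (R : realFieldType) n (a : 'cV[R]_n) : (forall i, 0 < a i 0) ->
  exists lo hi : R, [/\ 0 < lo, forall i, lo <= a i 0 & forall i, a i 0 <= hi].
Proof.
move=> a_gt0.
have term_le (F : 'I_n -> R) i : (forall j, 0 <= F j) -> F i <= 1 + \sum_j F j.
  by move=> F_ge0; rewrite (bigD1 i) //= addrCA lerDl addr_ge0 ?sumr_ge0.
exists (1 + \sum_i (a i 0)^-1)^-1, (1 + \sum_i a i 0).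
split=> [|i|i]; last by rewrite term_le // => j; rewrite ltW.
  by rewrite invr_gt0 ltr_wpDr ?sumr_ge0 // => i _; rewrite invr_ge0 ltW.
rewrite -[a i 0]invrK lef_pV2 ?posrE ?invr_gt0 ?ltr_wpDr ?sumr_ge0 //.
- by rewrite (term_le (fun j => (a j 0)^-1)) // => j; rewrite invr_ge0 ltW.
- by move=> j _; rewrite invr_ge0 ltW.
Qed.

Section QuadraticProgram.
Variables (R : realFieldType) (n : nat) (a b : 'cV[R]_n) (d : R).
Hypotheses (n_gt0 : (0 < n)%N) (a_gt0 : forall i, 0 < a i 0).
Local Notation one := (const_mx 1 : 'cV[R]_n).
Implicit Types x y : 'cV[R]_n.

(* The KKT conditions a_i x_i + b_i = nu, sum_i x_i = d, solved for x and nu. *)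
Definition qp_mult : R := (d + \sum_i b i 0 / a i 0) / \sum_i (a i 0)^-1.
Definition qp_opt : 'cV[R]_n := \col_i ((qp_mult - b i 0) / a i 0).

Lemma qp_opt_stationary i : a i 0 * qp_opt i 0 + b i 0 = qp_mult.
Proof. by rewrite mxE mulrC divfK ?subrK // lt0r_neq0. Qed.

Lemma Hmat_qp_opt : Hmat a *m qp_opt + b = qp_mult *: one.
Proof.
by apply/matrixP => i j; rewrite (ord1 j) [LHS]mxE Hmat_mulE qp_opt_stationary !mxE mulr1.
Qed.

Lemma mulmx_qp_opt_grad p (M : 'M[R]_(p, n)) :
  M *m one = 0 -> M *m b + M *m Hmat a *m qp_opt = 0.
Proof.
by move=> Mone; rewrite -mulmxA -mulmxDr addrC Hmat_qp_opt -scalemxAr Mone scaler0.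
Qed.

Lemma csum_qp_opt : csum qp_opt = d.
Proof.
have inv_gt0 : 0 < \sum_i (a i 0)^-1.
  rewrite (bigD1 (Ordinal n_gt0)) //= ltr_pwDl ?invr_gt0 ?sumr_ge0 // => i _.
  by rewrite invr_ge0 ltW.
rewrite /csum; under eq_bigr do rewrite mxE mulrBl.
by rewrite sumrB -mulr_sumr /qp_mult divfK ?addrK // lt0r_neq0.
Qed.

Lemma fobj_sub_qp_opt x : fobj a b x - fobj a b qp_opt =
  \sum_i 2^-1 * a i 0 * (x i 0 - qp_opt i 0) ^+ 2 + qp_mult * (csum x - csum qp_opt).
Proof.
rewrite /fobj /csum -!sumrB mulr_sumr -big_split /=.
by apply: eq_bigr => i _; rewrite -(qp_opt_stationary i); field.
Qed.

Lemma qp_gap_term_ge0 i z : 0 <= 2^-1 * a i 0 * z ^+ 2.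
Proof. by rewrite mulr_ge0 ?sqr_ge0 // mulr_ge0 ?invr_ge0 ?ler0n ?ltW. Qed.

Lemma qp_gap_ge0 x : 0 <= \sum_i 2^-1 * a i 0 * (x i 0 - qp_opt i 0) ^+ 2.
Proof. by apply: sumr_ge0 => i _; apply: qp_gap_term_ge0. Qed.

Lemma qp_opt_min x : csum x = d -> fobj a b qp_opt <= fobj a b x.
Proof.
move=> x_feas; rewrite -subr_ge0 fobj_sub_qp_opt x_feas csum_qp_opt subrr mulr0.
by rewrite addr0 qp_gap_ge0.
Qed.

Lemma qp_opt_unique y : csum y = d -> fobj a b y <= fobj a b qp_opt -> y = qp_opt.
Proof.
move=> y_feas y_le; have := fobj_sub_qp_opt y.
rewrite y_feas csum_qp_opt subrr mulr0 addr0 => gap.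
have gap0 : \sum_i 2^-1 * a i 0 * (y i 0 - qp_opt i 0) ^+ 2 = 0.
  by apply/eqP; rewrite eq_le qp_gap_ge0 -gap subr_le0 y_le.
have term_ge0 (i : 'I_n) : true -> 0 <= 2^-1 * a i 0 * (y i 0 - qp_opt i 0) ^+ 2.
  by move=> _; apply: qp_gap_term_ge0.
apply/matrixP => i j; rewrite (ord1 j); apply/eqP; rewrite -subr_eq0.
move/eqP: (psumr_eq0P term_ge0 gap0 (i := i) isT).
by rewrite !mulf_eq0 invr_eq0 pnatr_eq0 (negbTE (lt0r_neq0 (a_gt0 i))) /= orbb.
Qed.

End QuadraticProgram.

Lemma mul_geometric_sum (S : pzRingType) (x : S) r :
  (1 - x) * \sum_(p < r) x ^+ p = 1 - x ^+ r.
Proof. by rewrite -opprB mulNr -subrX1 opprB. Qed.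

Section Dana.
Variables (R : realFieldType) (n : nat) (a b : 'cV[R]_n) (w : 'M[R]_n).
Variables (U : 'M[R]_(n, n.-1)) (eps lo hi : R) (q : nat) (d : R) (xs : 'cV[R]_n).
Hypotheses (n_gt0 : (0 < n)%N) (w_sym : w^T = w).
Hypotheses (U_orth : U^T *m U = 1%:M) (U_perp : U^T *m (const_mx 1 : 'cV[R]_n) = 0).
Hypotheses (eps_ge0 : 0 <= eps) (eps_lt1 : eps < 1).
Hypothesis LHL_ge :
  loewner_le (- (eps%:M)) (1%:M - U^T *m laplacian w *m Hmat a *m laplacian w *m U).
Hypothesis LHL_le :
  loewner_le (1%:M - U^T *m laplacian w *m Hmat a *m laplacian w *m U) (eps%:M).
Hypotheses (lo_gt0 : 0 < lo) (a_ge : forall i, lo <= a i 0) (a_le : forall i, a i 0 <= hi).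
Hypothesis xs_feas : csum xs = d.
Hypothesis xs_stat : laplacian w *m b + laplacian w *m Hmat a *m xs = 0.

Local Notation one := (const_mx 1 : 'cV[R]_n).
Local Notation L := (laplacian w).
Local Notation H := (Hmat a).
Local Notation N := (U^T *m L *m H *m L *m U).
Local Notation B := (1%:M - N).
Local Notation T := (U^T *m L *m H).
Local Notation step := (dana_step L H b q).
Local Notation iterate := (dana_iter L H b q).

(* On x - xs this is the squared norm of the residual L (H x + b), as L (H xs + b) = 0. *)
Definition dana_lyap (e : 'cV[R]_n) : R := dot (T *m e) (T *m e).

Lemma qform_dana_lyap (e : 'cV[R]_n) : qform (T^T *m T) e = dana_lyap e.
Proof. by rewrite qformE -mulmxA dot_mulmxr trmxK. Qed.

Lemma dana_B_contraction_pow k (u : 'cV[R]_n.-1) :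
  dot (B ^+ k *m u) (B ^+ k *m u) <= (eps ^+ 2) ^+ k * dot u u.
Proof.
have L_sym := tr_laplacian w_sym.
have B_sym : B^T = B.
  by rewrite linearB /= trmx1 !trmx_mul !trmxK L_sym tr_Hmat !mulmxA.
apply: loewner_band_contraction_pow => //.
by move: LHL_ge; rewrite /loewner_le opprK.
Qed.

Lemma tr_compl_mulmx_laplacian : U^T *m L *m H *m L = N *m U^T.
Proof. by rewrite mulmx_proj_compl // -mulmxA laplacian_one mulmx0. Qed.

Lemma tr_compl_mulmx_dana_factor : U^T *m (1%:M - L *m H *m L) = B *m U^T.
Proof.
rewrite mulmxBr mulmx1 mulmxBl mul1mx; congr (_ - _).
by rewrite !mulmxA; exact: tr_compl_mulmx_laplacian.
Qed.

Lemma tr_compl_mulmx_dana_sum r :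
  U^T *m \sum_(p < r) (1%:M - L *m H *m L) ^+ p = (\sum_(p < r) B ^+ p) *m U^T.
Proof.
rewrite mulmx_sumr mulmx_suml; apply: eq_bigr => i _.
elim: {i}(i : nat) => [|p IHp]; first by rewrite !expr0 mulmx1 mul1mx.
rewrite !exprS -!mulmxE mulmxA tr_compl_mulmx_dana_factor -[B *m U^T *m _]mulmxA IHp.
by rewrite mulmxA.
Qed.

Lemma dana_N_geometric_sum r : N *m \sum_(p < r) B ^+ p = 1%:M - B ^+ r.
Proof. by rewrite -{1}(subKr 1%:M N) idmxE mulmxE mul_geometric_sum. Qed.

Lemma dana_step_err (x : 'cV[R]_n) : T *m (step x - xs) = B ^+ q.+1 *m (T *m (x - xs)).
Proof.
set e := x - xs.
have grad : L *m b + L *m H *m x = L *m H *m e.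
  by rewrite mulmxBr -[L *m b](addrK (L *m H *m xs)) xs_stat sub0r addrC.
have resid : T *m (L *m (\sum_(p < q.+1) (1%:M - L *m H *m L) ^+ p) *m (L *m H *m e)) =
    N *m (\sum_(p < q.+1) B ^+ p) *m (T *m e).
  rewrite !mulmxA [in LHS]tr_compl_mulmx_laplacian -[N *m U^T *m _]mulmxA.
  by rewrite tr_compl_mulmx_dana_sum !mulmxA.
rewrite /dana_step grad addrAC mulmxBr resid -{1}[T *m e]mul1mx -mulmxBl.
by rewrite dana_N_geometric_sum subKr.
Qed.

Lemma csum_dana_step (x : 'cV[R]_n) : csum (step x) = csum x.
Proof. by rewrite /dana_step !csumE dotBr -mulmxA dot_one_laplacian // subr0. Qed.

Lemma csum_dana_iter (x0 : 'cV[R]_n) k : csum (iterate x0 k) = csum x0.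
Proof. by elim: k => [|k IHk] //; rewrite /dana_iter iterS csum_dana_step. Qed.

Lemma dot_one_sub_feas (x : 'cV[R]_n) : csum x = d -> dot one (x - xs) = 0.
Proof. by move=> x_feas; rewrite dotBr -!csumE x_feas xs_feas subrr. Qed.

Lemma proj_compl_LHL : U *m U^T *m L *m H *m L *m U *m U^T = L *m H *m L.
Proof.
rewrite mulmx_proj_compl //; last by rewrite -!mulmxA laplacian_one !mulmx0.
rewrite -!mulmxA mulmxA proj_compl_id ?mulmxA //.
by rewrite tr_one_laplacian // !mul0mx.
Qed.

Lemma dot_dana_N (v : 'cV[R]_n) :
  dot (U^T *m v) (N *m (U^T *m v)) = dot (L *m v) (H *m (L *m v)).
Proof.
rewrite dot_mulmxl trmxK !mulmxA proj_compl_LHL.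
by rewrite dot_mulmxl tr_laplacian // !mulmxA.
Qed.

Lemma dot_dana_N_ge (u : 'cV[R]_n.-1) : (1 - eps) * dot u u <= dot u (N *m u).
Proof.
have := LHL_le u; rewrite qformE mulmxBl mul_scalar_mx mulmxBl mul1mx.
by rewrite !dotBr dotZr; lra.
Qed.

Lemma dot_dana_N_le (u : 'cV[R]_n.-1) : dot u (N *m u) <= (1 + eps) * dot u u.
Proof.
have := LHL_ge u; rewrite qformE opprK mulmxDl mul_scalar_mx mulmxBl mul1mx.
by rewrite dotDr dotBr dotZr; lra.
Qed.

Lemma dana_lyapE (e : 'cV[R]_n) : dana_lyap e = dot (L *m (H *m e)) (L *m (H *m e)).
Proof.
by rewrite /dana_lyap -!mulmxA dot_tr_orthonormal_compl_perp ?dot_one_laplacian.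
Qed.

Lemma dana_lyap_le (e : 'cV[R]_n) : dana_lyap e <= (1 + eps) * hi ^+ 2 / lo * dot e e.
Proof.
rewrite mulrAC ler_pdivlMr // mulrC dana_lyapE.
apply: le_trans (dot_Hmat_ge a_ge _) _.
rewrite -dot_dana_N; apply: le_trans (dot_dana_N_le _) _.
rewrite -mulrA; apply: ler_wpM2l; first by rewrite addr_ge0.
apply: le_trans (dot_tr_orthonormal_compl_le n_gt0 U_orth U_perp _) _.
exact: dot_Hmat_Hmat_le (ltW lo_gt0) a_ge a_le _.
Qed.

Lemma dana_hi_gt0 : 0 < hi.
Proof.
have i0 := Ordinal n_gt0.
exact: lt_le_trans lo_gt0 (le_trans (a_ge i0) (a_le i0)).
Qed.

Lemma dana_cond_gt0 : 0 < (1 - eps) * lo ^+ 2.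
Proof. by rewrite mulr_gt0 ?exprn_gt0 ?subr_gt0. Qed.

Lemma dana_lyap_ge (e : 'cV[R]_n) :
  dot one e = 0 -> dot e e <= hi / ((1 - eps) * lo ^+ 2) * dana_lyap e.
Proof.
move=> e_perp; set u := U^T *m (H *m e); set z := U^T *m e.
rewrite mulrAC ler_pdivlMr ?dana_cond_gt0 // mulrC.
have N_le_V : (1 - eps) * dot u u <= hi * dana_lyap e.
  apply: le_trans (dot_dana_N_ge _) _; rewrite dot_dana_N dana_lyapE.
  exact: dot_Hmat_le a_le _.
have zz : dot z z = dot e e by rewrite dot_tr_orthonormal_compl_perp.
have zu : lo * dot e e <= dot z u.
  by rewrite /z /u dot_mulmxr trmxK proj_compl_col //; exact: dot_Hmat_ge a_ge _.
have : 0 <= dot (lo *: z - u) (lo *: z - u) := dot_ge0 _.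
rewrite dotBl !dotBr !dotZl !dotZr (dotC u z) zz => sq_ge0.
have lo_zu : lo * (lo * dot e e) <= lo * dot z u := ler_wpM2l (ltW lo_gt0) zu.
have lo_u : lo ^+ 2 * dot e e <= dot u u by rewrite expr2 -mulrA; lra.
by apply: le_trans N_le_V; rewrite -mulrA ler_wpM2l // subr_ge0 ltW.
Qed.

(* Halfway between eps^(2(q+1)) and 1, so that it is positive even when eps = 0. *)
Definition dana_rate : R := (1 + (eps ^+ 2) ^+ q.+1) / 2.

Lemma dana_rate_bounds : [/\ (eps ^+ 2) ^+ q.+1 <= dana_rate, 0 < dana_rate & dana_rate < 1].
Proof.
have eps2_lt1 : eps ^+ 2 < 1 by move: eps_ge0 eps_lt1; rewrite expr2; nra.
have r_ge0 : 0 <= (eps ^+ 2) ^+ q.+1 by rewrite exprn_ge0 ?sqr_ge0.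
have r_lt1 : (eps ^+ 2) ^+ q.+1 < 1 by rewrite exprn_ilt1 ?sqr_ge0.
rewrite /dana_rate; move: r_ge0 r_lt1; move: ((eps ^+ 2) ^+ q.+1) => r.
by split; lra.
Qed.

Lemma dana_lyap_step (x : 'cV[R]_n) :
  dana_lyap (step x - xs) <= dana_rate * dana_lyap (x - xs).
Proof.
have [r_le _ _] := dana_rate_bounds.
rewrite /dana_lyap dana_step_err; apply: le_trans (dana_B_contraction_pow _ _) _.
by rewrite ler_wpM2r ?dot_ge0.
Qed.

Lemma dana_lyap_iter (x0 : 'cV[R]_n) k :
  dana_lyap (iterate x0 k - xs) <= dana_rate ^+ k * dana_lyap (x0 - xs).
Proof.
have [_ rate_gt0 _] := dana_rate_bounds.
elim: k => [|k IHk]; first by rewrite expr0 mul1r.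
rewrite /dana_iter iterS; apply: le_trans (dana_lyap_step _) _.
by rewrite exprS -mulrA; apply: ler_wpM2l; [exact: ltW | exact: IHk].
Qed.

Lemma dana_lyapunov_certificate : exists (P : 'M[R]_n) (c : R),
  [/\ P^T = P, 0 < c, c < 1,
      (forall x, csum x = d -> x != xs -> 0 < qform P (x - xs)) &
      (forall x0, csum x0 = d -> forall k,
         qform P (iterate x0 k.+1 - xs) <= (1 - c) * qform P (iterate x0 k - xs))].
Proof.
have [_ rate_gt0 rate_lt1] := dana_rate_bounds.
exists (T^T *m T), (1 - dana_rate); split.
- by rewrite trmx_mul trmxK.
- by rewrite subr_gt0.
- by rewrite gtrBl.
- move=> x x_feas x_neq_xs; rewrite qform_dana_lyap.
  have e_gt0 : 0 < dot (x - xs) (x - xs) by apply: dot_gt0; rewrite subr_eq0.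
  have := lt_le_trans e_gt0 (dana_lyap_ge (dot_one_sub_feas x_feas)).
  by rewrite pmulr_rgt0 // divr_gt0 ?dana_hi_gt0 ?dana_cond_gt0.
- by move=> x0 _ k; rewrite !qform_dana_lyap subKr; exact: dana_lyap_step.
Qed.

Lemma dana_exponential_convergence : exists C rho : R,
  [/\ 0 < C, 0 < rho, rho < 1 &
      forall x0, csum x0 = d -> forall k,
        qform 1%:M (iterate x0 k - xs) <= C * rho ^+ k * qform 1%:M (x0 - xs)].
Proof.
have [_ rate_gt0 rate_lt1] := dana_rate_bounds.
set C1 := hi / ((1 - eps) * lo ^+ 2); set C2 := (1 + eps) * hi ^+ 2 / lo.
have C1_gt0 : 0 < C1 by rewrite divr_gt0 ?dana_hi_gt0 ?dana_cond_gt0.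
have C2_gt0 : 0 < C2.
  by rewrite divr_gt0 ?mulr_gt0 ?exprn_gt0 ?dana_hi_gt0 // ltr_pwDl.
exists (C1 * C2), dana_rate; split => //; first exact: mulr_gt0.
move=> x0 x0_feas k; rewrite !qformE !mul1mx.
have xk_feas : csum (iterate x0 k) = d by rewrite csum_dana_iter.
have Vk_le : dana_lyap (iterate x0 k - xs) <=
    dana_rate ^+ k * (C2 * dot (x0 - xs) (x0 - xs)).
  apply: le_trans (dana_lyap_iter x0 k) _.
  by apply: ler_wpM2l; [rewrite exprn_ge0 ?ltW | exact: dana_lyap_le].
apply: le_trans (dana_lyap_ge (dot_one_sub_feas xk_feas)) _.
have -> : C1 * C2 * dana_rate ^+ k * dot (x0 - xs) (x0 - xs) =
    C1 * (dana_rate ^+ k * (C2 * dot (x0 - xs) (x0 - xs))) by ring.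
by apply: ler_wpM2l; first exact: ltW.
Qed.

End Dana.

Theorem theorem1 (R : realFieldType) (n : nat) (hn : (2 <= n)%N) (d : R)
  (a b : 'cV[R]_n) (ha : forall i, 0 < a i 0)
  (w : 'M[R]_n) (hw : weighted_graph w) (hconn : connected_graph w)
  (U : 'M[R]_(n, n.-1))
  (hUorth : U^T *m U = 1%:M) (hUperp : U^T *m (const_mx 1 : 'cV[R]_n) = 0)
  (eps : R) (heps0 : 0 <= eps) (heps1 : eps < 1)
  (hlow : loewner_le (- (eps%:M)) (1%:M - U^T *m laplacian w *m Hmat a *m laplacian w *m U))
  (hup : loewner_le (1%:M - U^T *m laplacian w *m Hmat a *m laplacian w *m U) (eps%:M))
  (q : nat) :
  let L := laplacian w in
  let H := Hmat a in
  exists xs : 'cV[R]_n,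
    [/\ csum xs = d,
        (forall x, csum x = d -> fobj a b xs <= fobj a b x),
        (forall y, csum y = d -> (forall x, csum x = d -> fobj a b y <= fobj a b x) -> y = xs),
        (forall x0, csum x0 = d -> forall k, csum (dana_iter L H b q x0 k) = d) &
        ((exists (P : 'M[R]_n) (c : R),
           [/\ P^T = P, 0 < c, c < 1,
               (forall x, csum x = d -> x != xs -> 0 < qform P (x - xs)) &
               (forall x0, csum x0 = d -> forall k,
                  qform P (dana_iter L H b q x0 k.+1 - xs)
                  <= (1 - c) * qform P (dana_iter L H b q x0 k - xs))]) /\
        (exists (C rho : R),
           [/\ 0 < C, 0 < rho, rho < 1 &
               forall x0, csum x0 = d -> forall k,
                 qform 1%:M (dana_iter L H b q x0 k - xs)
                 <= C * rho ^+ k * qform 1%:M (x0 - xs)]))].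
Proof.
move=> L H.
have n_gt0 : (0 < n)%N by apply: leq_trans hn.
have [w_sym _] := hw.
have [lo [hi [lo_gt0 a_ge a_le]]] := col_pos_bounds ha.
have xs_feas : csum (qp_opt a b d) = d by exact: csum_qp_opt.
have xs_stat : L *m b + L *m H *m qp_opt a b d = 0.
  exact: mulmx_qp_opt_grad (laplacian_one w).
(* Connectivity of the graph is implied by the spectral hypothesis on U^T L H L U. *)
exists (qp_opt a b d); split => //.
- by move=> x; apply: qp_opt_min.
- by move=> y y_feas y_opt; apply: qp_opt_unique => //; apply: y_opt.
- by move=> x0 x0_feas k; rewrite csum_dana_iter.
split.
- exact: (dana_lyapunov_certificate (U := U) (eps := eps) (lo := lo) (hi := hi)).
- exact: (dana_exponential_convergence (U := U) (eps := eps) (lo := lo) (hi := hi)).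
Qed.
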